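(* Consider a downlink system in which a base station with $N$ antennas and power budget $p>0$ serves $K$ single-antenna users through an $M$-element reconfigurable intelligent surface (RIS). For beamforming vectors $\{\mathbf{w}\}=\{\mathbf{w}_k\in\mathbb{C}^{N\times1}\}_{k=1}^K$ and an RIS matrix $\mathbf{\Phi}\in\mathbb{C}^{M\times M}$, the SINR of user $k$ is \[ \gamma_k=\frac{|\mathbf{h}_k(\mathbf{\Phi})\mathbf{w}_k|^2}{\sigma^2+\sum_{i\neq k}|\mathbf{h}_k(\mathbf{\Phi})\mathbf{w}_i|^2},\qquad \mathbf{h}_k(\mathbf{\Phi})=\mathbf{f}_k\mathbf{\Phi}\mathbf{F}, \] and its rate is $r_k=f(\gamma_k)$ with $f(\gamma)=\ln(1+\gamma)-c\sqrt{\frac{2\gamma}{1+\gamma}}$ and $c=Q^{-1}(\epsilon)/\sqrt{n}$. Let the set of feasible pairs $(\{\mathbf{w}\},\mathbf{\Phi})$ be those with $\sum_k\|\mathbf{w}_k\|^2\le p$ and $\mathbf{\Phi}\in\mathcal{E}$ (where $\mathcal{E}$ is any one of the RIS feasible sets described in the context), and assume that $\gamma_k\geq\bar{\gamma}=\frac12(\sqrt{1+2c^2}-1)$ for all $k=1,\dots,K$. Let the SINR region be the set of all achievable SINR vectors $(\gamma_1,\dots,\gamma_K)$ and the rate region be the set of all achievable rate vectors $(r_1,\dots,r_K)$ over feasible pairs. Then every point on the boundary of the rate region corresponds (via $r_k=f(\gamma_k)$ for each $k$) to a point on the boundary of the SINR region, and vice versa.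
   Context: $\mathbf{F}\in\mathbb{C}^{M\times N}$ is the base-station-to-RIS channel matrix, $\mathbf{f}_k\in\mathbb{C}^{1\times M}$ the RIS-to-user-$k$ channel, $\sigma^2>0$ the noise power, $n$ the block length and $\epsilon\in(0,1)$ the maximum tolerable decoding error probability; $Q^{-1}$ is the inverse Gaussian $Q$-function. The transmit signal is $\mathbf{x}=\sum_k\mathbf{w}_ks_k$ with i.i.d. $s_k\sim\mathcal{CN}(0,1)$, so $\mathbb{E}\{\mathbf{x}\mathbf{x}^H\}=\sum_k\mathbf{w}_k\mathbf{w}_k^H$. The RIS feasible set $\mathcal{E}$ is one of: (i) locally passive diagonal: $\mathbf{\Phi}$ diagonal with $|\phi_{mm}|=1$ for all $m$; (ii) globally passive diagonal: $\mathbf{\Phi}$ diagonal with $\mathrm{Tr}\big(\mathbf{F}\mathbb{E}\{\mathbf{x}\mathbf{x}^H\}\mathbf{F}^H(\mathbf{\Phi}^H\mathbf{\Phi}-\mathbf{I}_M)\big)\le 0$; (iii) globally passive beyond diagonal: $\mathbf{\Phi}=\mathbf{\Phi}^T$ with $\mathrm{Tr}\big(\mathbf{F}\mathbb{E}\{\mathbf{x}\mathbf{x}^H\}\mathbf{F}^H(\mathbf{\Phi}^H\mathbf{\Phi}-\mathbf{I}_M)\big)\le 0$. A point of a region in $\mathbb{R}^K$ is on its boundary if no other point of the region is componentwise at least as large with at least one component strictly larger. *)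

From HB Require Import structures.
From mathcomp Require Import all_boot all_order all_algebra.
From mathcomp Require Import all_classical all_reals all_analysis.
From mathcomp Require Import complex.
Set Implicit Arguments. Unset Strict Implicit. Unset Printing Implicit Defensive.
Import Order.TTheory GRing.Theory Num.Theory.
Local Open Scope ring_scope.
Local Open Scope classical_set_scope.

Definition Qfun (R : realType) (x : R) : R :=
  (Num.sqrt (pi *+ 2))^-1 *
  Rintegral (@lebesgue_measure R) `[x, +oo[ (fun t : R => expR (- (t ^+ 2) / 2)).

(* inverse Gaussian Q-function (Q is a bijection R -> (0,1)) *)
Definition Qinv (R : realType) (eps : R) : R := xget 0 [set x | Qfun x = eps].

Definition cconst (R : realType) (eps : R) (n : nat) : R :=
  Qinv eps / Num.sqrt n%:R.

Definition ratef (R : realType) (c g : R) : R :=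
  ln (1 + g) - c * Num.sqrt (g *+ 2 / (1 + g)).

Definition gbar (R : realType) (c : R) : R :=
  (Num.sqrt (1 + (c ^+ 2) *+ 2) - 1) / 2.

Section Model.
Variables (R : realType) (N M K : nat).
Local Notation C := R[i].

Definition conjT (m n : nat) (A : 'M[C]_(m, n)) : 'M[C]_(n, m) :=
  map_mx (fun z : C => conjc z) A^T.

Definition sqmod (z : C) : R := ComplexField.Normc.normc z ^+ 2.

Definition sqnormv (v : 'cV[C]_N) : R := \sum_(j < N) sqmod (v j 0).

Definition hw (F : 'M[C]_(M, N)) (fk : 'I_K -> 'rV[C]_M) (Phi : 'M[C]_M)
  (w : 'I_K -> 'cV[C]_N) (k i : 'I_K) : C :=
  (fk k *m Phi *m F *m w i) 0 0.

Definition sinr (F : 'M[C]_(M, N)) (fk : 'I_K -> 'rV[C]_M) (sigma2 : R)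
  (w : 'I_K -> 'cV[C]_N) (Phi : 'M[C]_M) (k : 'I_K) : R :=
  sqmod (hw F fk Phi w k k) /
  (sigma2 + \sum_(i < K | i != k) sqmod (hw F fk Phi w k i)).

Definition txcov (w : 'I_K -> 'cV[C]_N) : 'M[C]_N :=
  \sum_(k < K) (w k *m conjT (w k)).

(* global passivity: Tr(F E{xx^H} F^H (Phi^H Phi - I)) <= 0, using the
   order of the numeric field C (z <= 0 iff z is real and nonpositive) *)
Definition global_passive (F : 'M[C]_(M, N)) (w : 'I_K -> 'cV[C]_N)
  (Phi : 'M[C]_M) : Prop :=
  \tr (F *m txcov w *m conjT F *m (conjT Phi *m Phi - 1%:M)) <= 0.

Inductive RISmodel := LocalDiag | GlobalDiag | GlobalBD.

Definition RISfeasible (m : RISmodel) (F : 'M[C]_(M, N))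
  (w : 'I_K -> 'cV[C]_N) (Phi : 'M[C]_M) : Prop :=
  match m with
  | LocalDiag => is_diag_mx Phi /\ (forall j : 'I_M, `|Phi j j| = 1)
  | GlobalDiag => is_diag_mx Phi /\ global_passive F w Phi
  | GlobalBD => Phi = Phi^T /\ global_passive F w Phi
  end.

Definition feasible (m : RISmodel) (F : 'M[C]_(M, N)) (fk : 'I_K -> 'rV[C]_M)
  (sigma2 p c : R) (w : 'I_K -> 'cV[C]_N) (Phi : 'M[C]_M) : Prop :=
  \sum_(k < K) sqnormv (w k) <= p /\ RISfeasible m F w Phi /\
  (forall k, gbar c <= sinr F fk sigma2 w Phi k).

Definition sinr_region m F fk sigma2 p c : set ('I_K -> R) :=
  [set g | exists w Phi, feasible m F fk sigma2 p c w Phi /\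
                         g = sinr F fk sigma2 w Phi].

Definition rate_region m F fk sigma2 p c : set ('I_K -> R) :=
  [set r | exists w Phi, feasible m F fk sigma2 p c w Phi /\
                         r = (fun k => ratef c (sinr F fk sigma2 w Phi k))].

End Model.

(* Pareto boundary of a region in R^K *)
Definition on_boundary (R : realType) (K : nat) (S : set ('I_K -> R))
  (x : 'I_K -> R) : Prop :=
  S x /\ ~ (exists y, S y /\ (forall k, x k <= y k) /\ (exists k, x k < y k)).

From HB Require Import structures.
From mathcomp Require Import all_boot all_order all_algebra.
From mathcomp Require Import all_classical all_reals all_analysis.
From mathcomp Require Import complex.
From mathcomp Require Import ring lra.
Import Order.TTheory GRing.Theory Num.Theory.
Local Open Scope ring_scope.

(* The rate region is the image of the SINR region under the componentwise map
   gamma |-> f(gamma), and every achievable SINR is at least gbar.  On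
   [gbar, +oo[ the rate function is strictly increasing: the logarithm gains at
   least (b - a) / (1 + b) from a to b, whereas the penalty
   c sqrt(2 gamma / (1 + gamma)) grows by strictly less, because gamma >= gbar
   means exactly c^2 <= 2 gamma (1 + gamma).  A componentwise strictly
   increasing map preserves and reflects Pareto dominance, so it maps the
   Pareto boundary onto the Pareto boundary. *)

Section RateFunction.
Context {R : realType}.
Implicit Types a b c x y : R.

Lemma lnB_ge x y : 0 < x -> 0 < y -> (y - x) / y <= ln y - ln x.
Proof.
move=> x0 y0.
have xy0 : 0 < x / y by rewrite divr_gt0.
have := @le_ln1Dx _ (x / y - 1) ltac:(lra).
rewrite addrC subrK ln_div ?posrE //.
have -> : (y - x) / y = 1 - x / y by field; rewrite gt_eqF.
lra.
Qed.

Lemma le_gbar_sqr c a : gbar c <= a -> 0 <= a /\ c ^+ 2 <= a *+ 2 * (1 + a).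
Proof.
rewrite /gbar => ha.
set s := Num.sqrt _ in ha.
have s0 : 0 <= s by apply: sqrtr_ge0.
have ss : s ^+ 2 = 1 + (c ^+ 2) *+ 2 by rewrite sqr_sqrtr // addr_ge0 ?mulrn_wge0 ?sqr_ge0.
have s1 : 1 <= s.
  by rewrite -(@ler_pXn2r _ 2) ?nnegrE // expr1n ss lerDl mulrn_wge0 ?sqr_ge0.
rewrite !mulr2n in ss *.
split; nra.
Qed.

Lemma sqr_sqrt_frac {a} : 0 <= a -> Num.sqrt (a *+ 2 / (1 + a)) ^+ 2 * (1 + a) = a *+ 2.
Proof.
move=> a0; rewrite sqr_sqrtr ?mulfVK ?divr_ge0 ?mulrn_wge0 //; lra.
Qed.

Lemma sqrt_frac_incr_lt {c a b} : 0 <= a -> a < b -> c ^+ 2 <= a *+ 2 * (1 + a) ->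
  c * (Num.sqrt (b *+ 2 / (1 + b)) - Num.sqrt (a *+ 2 / (1 + a))) < (b - a) / (1 + b).
Proof.
move=> a0 ab hc.
have ea := sqr_sqrt_frac a0; have eb := sqr_sqrt_frac (ltW (le_lt_trans a0 ab)).
set sa := Num.sqrt (a *+ 2 / _) in ea *; set sb := Num.sqrt _ in eb *.
have sa0 : 0 <= sa by apply: sqrtr_ge0.
have b1 : 0 < 1 + b by lra.
have sab : sa < sb.
  rewrite ltr_sqrt; last by rewrite divr_gt0 // mulrn_wgt0 //; lra.
  rewrite ltr_pdivrMr; last lra.
  rewrite mulrAC ltr_pdivlMr //.
  rewrite !mulr2n; nra.
have a1 : 0 < 1 + a by lra.
have c_le : c <= (1 + a) * sa.
  have : c ^+ 2 <= ((1 + a) * sa) ^+ 2.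
    have -> : ((1 + a) * sa) ^+ 2 = (1 + a) * (sa ^+ 2 * (1 + a)) by ring.
    by rewrite ea mulrC.
  have : 0 <= (1 + a) * sa by rewrite mulr_ge0 //; lra.
  nra.
rewrite ltr_pdivlMr // -(@ltr_pM2r _ ((sa + sb) * (1 + a))); last by rewrite mulr_gt0 //; lra.
(* (sb - sa) (sb + sa) (1 + a) (1 + b) = 2 (b - a) *)
have -> : c * (sb - sa) * (1 + b) * ((sa + sb) * (1 + a)) =
          c * ((1 + a) * (sb ^+ 2 * (1 + b)) - (1 + b) * (sa ^+ 2 * (1 + a))) by ring.
rewrite ea eb !mulr2n.
have : c + c < (1 + a) * (sa + sb) by nra.
nra.
Qed.

Lemma ratef_lt c a b : gbar c <= a -> a < b -> ratef c a < ratef c b.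
Proof.
move=> /le_gbar_sqr [a0 hc] ab.
have hln := @lnB_ge (1 + a) (1 + b) ltac:(lra) ltac:(lra).
have hsqrt := sqrt_frac_incr_lt a0 ab hc.
rewrite (_ : 1 + b - (1 + a) = b - a) in hln; last by ring.
rewrite /ratef; lra.
Qed.

Lemma ler_ratef c : {in `[gbar c, +oo[ &, {mono ratef c : x y / x <= y}}.
Proof.
apply: le_mono_in => a b; rewrite in_itv /= andbT => ha _.
exact: ratef_lt.
Qed.

End RateFunction.

Section ParetoBoundary.
Context {R : realType} {K : nat} {D : {pred R}} {f : R -> R}.
Hypothesis f_mono : {in D &, {mono f : x y / x <= y}}.
Context {S : set ('I_K -> R)}.
Hypothesis S_in_D : forall x, S x -> forall k, x k \in D.

Lemma on_boundary_comp x : S x ->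
  on_boundary [set f \o y | y in S]%classic (f \o x) <-> on_boundary S x.
Proof.
have f_ltmono := leW_mono_in f_mono.
move=> Sx; split=> -[_ nd].
- split=> // -[y [Sy [le_xy [k lt_xy]]]]; apply: nd; exists (f \o y).
  split; first by exists y.
  split; first by move=> j /=; rewrite f_mono ?S_in_D.
  by exists k; rewrite /= f_ltmono ?S_in_D.
- split=> [|[_ [[y Sy <-] [le_xy [k lt_xy]]]]]; first by exists x.
  apply: nd; exists y.
  split=> //; split; first by move=> j; rewrite -f_mono ?S_in_D ?le_xy.
  by exists k; rewrite -f_ltmono ?S_in_D.
Qed.

End ParetoBoundary.

Section Regions.
Context {R : realType} {N M K : nat} {m : RISmodel}.
Context {F : 'M[R[i]]_(M, N)} {fk : 'I_K -> 'rV[R[i]]_M} {sigma2 p c : R}.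

Lemma sinr_region_ge_gbar g : sinr_region m F fk sigma2 p c g ->
  forall k, g k \in `[gbar c, +oo[.
Proof.
by move=> [w [Phi [[_ [_ ge_gbar]] ->]]] k; rewrite in_itv /= andbT ge_gbar.
Qed.

Lemma rate_regionE : rate_region m F fk sigma2 p c =
  [set ratef c \o g | g in sinr_region m F fk sigma2 p c]%classic.
Proof.
apply/seteqP; split=> r.
- by move=> [w [Phi [fe ->]]]; exists (sinr F fk sigma2 w Phi) => //; exists w, Phi.
- by move=> [_ [w [Phi [fe ->]]] <-]; exists w, Phi.
Qed.

Lemma on_boundary_rate_region g : sinr_region m F fk sigma2 p c g ->
  on_boundary (rate_region m F fk sigma2 p c) (ratef c \o g) <->
  on_boundary (sinr_region m F fk sigma2 p c) g.
Proof.
move=> Sg; rewrite rate_regionE.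
apply: (on_boundary_comp (ler_ratef c) _ g Sg) => h Sh k.
exact: sinr_region_ge_gbar.
Qed.

End Regions.

Theorem lemma2 (R : realType) (N M K : nat) (m : RISmodel)
  (F : 'M[R[i]]_(M, N)) (fk : 'I_K -> 'rV[R[i]]_M)
  (sigma2 p eps : R) (n : nat)
  (hsigma : 0 < sigma2) (hp : 0 < p) (heps0 : 0 < eps) (heps1 : eps < 1)
  (hn : (0 < n)%N) :
  let c := cconst eps n in
  (forall r, on_boundary (rate_region m F fk sigma2 p c) r ->
     exists g, on_boundary (sinr_region m F fk sigma2 p c) g /\
               forall k, r k = ratef c (g k)) /\
  (forall g, on_boundary (sinr_region m F fk sigma2 p c) g ->
     on_boundary (rate_region m F fk sigma2 p c) (fun k => ratef c (g k))).
Proof.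
move=> c; split=> [r r_bd | g g_bd].
- have := r_bd.1; rewrite rate_regionE => -[g Sg r_def].
  rewrite -r_def on_boundary_rate_region // in r_bd.
  by exists g; split=> // k; rewrite -r_def.
- exact/(on_boundary_rate_region _ g_bd.1).
Qed.
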